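(* (a) For all $S\in\{L,R\}^*$, $M(S)\equiv N(S)\pmod 2$. (b) Let $S=S(k_0,\dots,k_m)$ and $S'=S(k'_0,\dots,k'_n)$ be strings, and set $k_i=0$ for $i>m$ and $k'_i=0$ for $i>n$. Then $r(S)<r(S')$ if and only if there is an index $i\geq0$ such that $k_j=k'_j$ for all $j<i$ and either $i$ is even and $k_i<k'_i$, or $i$ is odd and $k_i>k'_i$ (an ''alternating lexicographic'' ordering of $(k_0,k_1,k_2,\dots)$).
   Context: $\{L,R\}^*$ is the free monoid on $L,R$ (strings), with empty string $\varepsilon$; $|S|$ is the number of symbols of $S$. For $k_0\geq 0$, $k_1,\dots,k_m\geq 1$, $S(k_0,\dots,k_m)$ is the string $R^{k_0}L^{k_1}R^{k_2}\cdots$ with $m+1$ alternating blocks (last block $R^{k_m}$ if $m$ even, $L^{k_m}$ if $m$ odd); each string has exactly one such representation, with $\varepsilon=S(0)$. Define $M(\varepsilon)=0$ and $M(S(k_0,\dots,k_m))=m$ (where $k_m\geq1$ if $m\geq 1$). Define $N(\varepsilon)=0$, $N(SL)=2N(S)+1$, $N(SR)=2N(S)+2$. Define $r(\varepsilon)=1$, $r(SL)=r(S)-2^{-|SL|}$, $r(SR)=r(S)+2^{-|SR|}$. *)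

From mathcomp Require Import all_boot all_order all_algebra.
Set Implicit Arguments. Unset Strict Implicit. Unset Printing Implicit Defensive.
Import Order.TTheory GRing.Theory Num.Theory.

Inductive LR := L | R.

Definition flipLR (b : LR) := match b with L => R | R => L end.

Fixpoint blocks (b : LR) (ks : seq nat) : seq LR :=
  match ks with
  | [::] => [::]
  | k :: t => nseq k b ++ blocks (flipLR b) t
  end.

Definition Sof (ks : seq nat) : seq LR := blocks R ks.

Definition valid_ks (ks : seq nat) : bool :=
  (ks != [::]) && all (fun k => 0 < k) (behead ks).

(* M(S) = m where S = S(k_0,...,k_m) is the (unique) representation *)
Definition Mof (ks : seq nat) : nat := (size ks).-1.

(* N and r, defined by recursion on appending a letter at the end;
   we recurse on the reversed string. *)
Fixpoint Nrev (s : seq LR) : nat :=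
  match s with
  | [::] => 0
  | L :: t => (Nrev t).*2 + 1
  | R :: t => (Nrev t).*2 + 2
  end.
Definition N (S : seq LR) : nat := Nrev (rev S).

Local Open Scope ring_scope.
Fixpoint rrev (s : seq LR) : rat :=
  match s with
  | [::] => 1
  | L :: t => rrev t - (2%:R ^- (size s))
  | R :: t => rrev t + (2%:R ^- (size s))
  end.
Definition r (S : seq LR) : rat := rrev (rev S).

From mathcomp Require Import all_boot all_order all_algebra.
From mathcomp Require Import ring lra zify.
Import Order.TTheory GRing.Theory Num.Theory.

Set Implicit Arguments.
Unset Strict Implicit.
Unset Printing Implicit Defensive.
Local Open Scope ring_scope.

(* r(S) = 1 + sum_i (+-1) 2^-(i+1), a binary expansion with digits +-1 that
   lies strictly between 0 and 2.  Hence strings sharing a prefix compare like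
   their tails, a tail starting with R beats the empty tail, which beats one
   starting with L.  In S(k_0,...,k_m) = R^k_0 L^k_1 ..., the first differing
   exponent decides: the string with the longer block keeps the block's letter
   where the other one switches letter (or ends), and the letter of block i is
   R exactly when i is even.  For (a), N(S) is odd iff S ends with L, and the
   last block of S(k_0,...,k_m) consists of L's iff m is odd. *)

Definition sign_LR (x : LR) : rat := if x is L then -1 else 1.

Fixpoint value_LR (s : seq LR) : rat :=
  if s is x :: t then (sign_LR x + value_LR t) / 2 else 0.

Lemma value_LR_bounds s : -1 < value_LR s < 1.
Proof.
elim: s => [|x t /andP[? ?]] /=; first lra.
by case: x => /=; apply/andP; split; lra.
Qed.

Lemma value_LR_lt_cat2l p s s' :
  (value_LR (p ++ s) < value_LR (p ++ s')) = (value_LR s < value_LR s').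
Proof. by elim: p => [|x p IH] //=; rewrite -IH; apply/idP/idP; lra. Qed.

Lemma value_LR_map_flip s : value_LR (map flipLR s) = - value_LR s.
Proof. by elim: s => [|[] t IH] /=; rewrite ?IH; lra. Qed.

Lemma value_LR_rcons s x :
  value_LR (rcons s x) = value_LR s + sign_LR x / 2 ^+ (size s).+1.
Proof.
elim: s => [|y s IH] /=; first by rewrite expr1; lra.
have two_pow_neq0 : (2 : rat) ^+ size s != 0 by rewrite expf_neq0.
by rewrite IH !exprS; field.
Qed.

Lemma r_value_LR S : r S = 1 + value_LR S.
Proof.
elim/last_ind: S => [|s x IH]; first by rewrite /r /=; lra.
rewrite /r rev_rcons /= size_rev -/(r s) IH value_LR_rcons.
by case: x => /=; lra.
Qed.

Lemma blocks_flipLR b ks : blocks (flipLR b) ks = map flipLR (blocks b ks).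
Proof. by elim: ks b => [|k ks IH] b //=; rewrite map_cat map_nseq IH; case: b. Qed.

Lemma Sof_cons k ks : Sof (k :: ks) = nseq k R ++ map flipLR (Sof ks).
Proof. by rewrite /Sof /= -blocks_flipLR. Qed.

Lemma Sof_head_behead ks : Sof ks = Sof (head 0%N ks :: behead ks).
Proof. by case: ks. Qed.

Definition positive (k : nat) : bool := (0 < k)%N.

Lemma value_LR_blocks_L_le0 ks : all positive ks -> value_LR (blocks L ks) <= 0.
Proof.
case: ks => [|[|k] ks] //= _.
by case/andP: (value_LR_bounds (nseq k L ++ blocks R ks)) => ? ?; lra.
Qed.

Lemma value_LR_Sof_lt_head k ks k' ks' : (k < k')%N -> all positive ks ->
  value_LR (Sof (k :: ks)) < value_LR (Sof (k' :: ks')).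
Proof.
move=> lt_kk' pos_ks; rewrite /Sof /=.
have -> : k' = (k + (k' - k - 1).+1)%N by lia.
rewrite nseqD -catA value_LR_lt_cat2l /=.
have := value_LR_blocks_L_le0 pos_ks.
by case/andP: (value_LR_bounds (nseq (k' - k - 1) R ++ blocks L ks')) => ? ?; lra.
Qed.

Lemma value_LR_Sof_lt_cons2 k ks ks' :
  (value_LR (Sof (k :: ks)) < value_LR (Sof (k :: ks'))) =
  (value_LR (Sof ks') < value_LR (Sof ks)).
Proof. by rewrite !Sof_cons value_LR_lt_cat2l !value_LR_map_flip ltrN2. Qed.

Definition alt_lex (ks ks' : seq nat) : Prop := exists i : nat,
  (forall j, (j < i)%N -> nth 0%N ks j = nth 0%N ks' j) /\
  ((~~ odd i /\ (nth 0%N ks i < nth 0%N ks' i)%N) \/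
   (odd i /\ (nth 0%N ks' i < nth 0%N ks i)%N)).

Lemma alt_lex_irr ks : ~ alt_lex ks ks.
Proof. by case=> i [_ [[_ lt_ii]|[_ lt_ii]]]; rewrite ltnn in lt_ii. Qed.

Lemma alt_lex_cons k ks k' ks' :
  alt_lex (k :: ks) (k' :: ks') <-> (k < k')%N \/ (k = k' /\ alt_lex ks' ks).
Proof.
split.
- case=> [[|i] [eq_prefix lt_i]].
  + by left; case: lt_i => [[_ ?]|[? _]].
  + right; split; first exact: (eq_prefix 0%N).
    exists i; split; first by move=> j lt_ji; symmetry; apply: (eq_prefix j.+1).
    by rewrite /= negbK in lt_i; case: lt_i => [[? ?]|[? ?]]; [right|left].
- case=> [lt_kk'|[<- [i [eq_prefix lt_i]]]]; first by exists 0%N; split => //; left.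
  exists i.+1; split; first by case=> [|j] //= lt_ji; rewrite eq_prefix.
  by rewrite /= negbK; case: lt_i => [[? ?]|[? ?]]; [right|left].
Qed.

Lemma alt_lex_eq_nth ks1 ks2 ks1' ks2' :
  nth 0%N ks1 =1 nth 0%N ks2 -> nth 0%N ks1' =1 nth 0%N ks2' ->
  alt_lex ks1 ks1' <-> alt_lex ks2 ks2'.
Proof.
move=> e e'; split; case=> i [eq_prefix lt_i]; exists i.
- by split=> [j /eq_prefix|]; rewrite -e -e'.
- by split=> [j /eq_prefix|]; rewrite e e'.
Qed.

Lemma nth_head_behead (ks : seq nat) : nth 0%N ks =1 nth 0%N (head 0%N ks :: behead ks).
Proof. by case: ks => [|k ks] [|j] //=; rewrite nth_nil. Qed.

Lemma value_LR_Sof_lt k ks k' ks' : all positive ks -> all positive ks' ->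
  value_LR (Sof (k :: ks)) < value_LR (Sof (k' :: ks')) <-> alt_lex (k :: ks) (k' :: ks').
Proof.
have [n] := ubnP (size ks + size ks').
elim: n k ks k' ks' => // n IH k ks k' ks' size_lt pos_ks pos_ks'.
rewrite alt_lex_cons; case: (ltngtP k k') => [lt_kk'|lt_k'k|<-].
- by split=> _; [left|apply: value_LR_Sof_lt_head].
- have lt_S'S := value_LR_Sof_lt_head ks lt_k'k pos_ks'.
  split=> [/(lt_trans lt_S'S)|]; first by rewrite ltxx.
  by case=> [|[]]; lia.
rewrite value_LR_Sof_lt_cons2.
have [[-> ->]|nonempty] : (ks = [::] /\ ks' = [::]) \/ (0 < size ks + size ks')%N.
  by case: ks ks' {size_lt pos_ks pos_ks'} => [|? ?] [|? ?]; [left|right..].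
  by rewrite ltxx; split=> [//|[//|[_ /alt_lex_irr]]].
rewrite (Sof_head_behead ks) (Sof_head_behead ks').
rewrite (alt_lex_eq_nth (nth_head_behead ks') (nth_head_behead ks)) IH.
- by split=> [?|[//|[]]]; [right|].
- by move: size_lt nonempty; rewrite !size_behead; lia.
- by case: ks' pos_ks' {size_lt nonempty} => //= ? ? /andP[].
- by case: ks pos_ks {size_lt nonempty} => //= ? ? /andP[].
Qed.

Lemma Sof_surjective S : exists ks, valid_ks ks /\ Sof ks = S.
Proof.
elim: S => [|[] S [[|k ks] [//= pos_ks <-]]]; first by exists [:: 0%N].
- case: k => [|k] in pos_ks *.
  + case: ks pos_ks => [|k1 ks] pos_ks; first by exists [:: 0%N; 1%N].
    by exists [:: 0%N, k1.+1 & ks]; move: pos_ks; rewrite /valid_ks /= => /andP[].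
  + by exists [:: 0%N, 1%N, k.+1 & ks].
- by exists (k.+1 :: ks).
Qed.

Lemma last_nseq_self (T : Type) (x : T) k : last x (nseq k x) = x.
Proof. by elim: k. Qed.

Definition is_L (x : LR) : bool := if x is L then true else false.

Lemma odd_N S : odd (N S) = is_L (last R S).
Proof.
case/lastP: S => [|s x] //.
by rewrite /N rev_rcons last_rcons; case: x => /=; rewrite ?addn1 ?addn2 /= odd_double.
Qed.

Lemma last_blocks b ks : all positive ks ->
  last (flipLR b) (blocks b ks) = if odd (size ks) then b else flipLR b.
Proof.
elim: ks b => [|[|k] ks IH] b //= pos_ks.
rewrite last_cat last_nseq_self.
by case: b; [rewrite (IH R)|rewrite (IH L)]; case: odd.
Qed.

Lemma odd_Mof ks : valid_ks ks -> odd (Mof ks) = is_L (last R (Sof ks)).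
Proof.
case: ks => [|k ks] // /andP[_ /= pos_ks].
rewrite /Mof /Sof /= last_cat last_nseq_self.
by rewrite (last_blocks L pos_ks); case: odd.
Qed.

Theorem corollary3 :
  (* (a) *)
  (forall S : seq LR,
      (exists ks, valid_ks ks /\ Sof ks = S) /\
      (forall ks, valid_ks ks -> Sof ks = S -> odd (Mof ks) = odd (N S)))
  /\
  (* (b) *)
  (forall ks ks' : seq nat, valid_ks ks -> valid_ks ks' ->
      ((r (Sof ks) < r (Sof ks'))%R <->
       exists i : nat,
         (forall j, (j < i)%N -> nth 0%N ks j = nth 0%N ks' j) /\
         ((~~ odd i /\ (nth 0%N ks i < nth 0%N ks' i)%N) \/
          (odd i /\ (nth 0%N ks' i < nth 0%N ks i)%N)))).
Proof.
split=> [S|[//|k ks] [//|k' ks'] /andP[_ /= pos_ks] /andP[_ /= pos_ks']].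
  split; first exact: Sof_surjective.
  by move=> ks ks_valid <-; rewrite odd_N odd_Mof.
rewrite !r_value_LR ltrD2l.
exact: value_LR_Sof_lt.
Qed.
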